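(* Let $N_1=(S_1,A,L_1,AP,V_1,\{s_0^1\})$ and $N_2=(S_2,A,L_2,AP,V_2,\{s_0^2\})$ be deterministic APAs in SVNF with $N_1\not\preceq N_2$, and let $\mathcal R$ be their maximal refinement relation. For every pair $(s_1,s_2)\in S_1\times S_2$ in case 3 and every action $e\in(B_c(s_1,s_2)\cup B_f(s_1,s_2))\cap\mathrm{Breaking}(s_1,s_2)$, there exist constraints $\phi_1\in C(S_1)$, $\phi_2\in C(S_2)$ with $L_1(s_1,e,\phi_1)\ne\bot$ and $L_2(s_2,e,\phi_2)\ne\bot$, and a distribution $\mu_1\in Sat(\phi_1)$ such that at least one of the following holds: (1) there is $s_1'\in S_1$ with $\mu_1(s_1')>0$ and $\mathsf{succ}_{s_2,e}(s_1')=\emptyset$; (2) the function $\mu_1^2:S_2\to[0,1]$, $s_2'\mapsto\sum_{\{s_1'\in S_1\mid s_2'=\mathsf{succ}_{s_2,e}(s_1')\}}\mu_1(s_1')$, is not in $Sat(\phi_2)$; (3) there are $s_1'\in S_1$, $s_2'\in S_2$ with $\mu_1(s_1')>0$, $s_2'=\mathsf{succ}_{s_2,e}(s_1')$ and $\mathrm{ind}_{\mathcal R}(s_1',s_2')<\mathrm{ind}_{\mathcal R}(s_1,s_2)$.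
   Context: For a finite set $S$, $\mathrm{Dist}(S)$ is the set of probability distributions on $S$; $C(S)$ is a set of constraints, each $\phi\in C(S)$ determining $Sat(\phi)\subseteq\mathrm{Dist}(S)$. An APA is a tuple $N=(S,A,L,AP,V,S_0)$ with finite state set $S$, initial states $S_0\subseteq S$, finite action set $A$, finite set $AP$ of atomic propositions, $L:S\times A\times C(S)\to\{\top,?,\bot\}$ ($\top$: must, $?$: may, $\bot$: no transition) and $V:S\to 2^{2^{AP}}$. An APA is in SVNF if $|V(s)|\le1$ for all $s$; it is deterministic if it has exactly one initial state, for all $s,a$ at most one $\phi$ has $L(s,a,\phi)\ne\bot$, and for all $s,a,\phi$ with $L(s,a,\phi)\ne\bot$ and distinct states $s',s''$ with $V(s')\cap V(s'')\ne\emptyset$ there are no $\mu,\mu'\in Sat(\phi)$ with $\mu(s')>0$ and $\mu'(s'')>0$. For $\mu\in\mathrm{Dist}(S)$, $\mu'\in\mathrm{Dist}(S')$, $\mathcal Q\subseteq S\times S'$, $\mu\Subset_{\mathcal Q}\mu'$ means there is $\delta:S\to(S'\to[0,1])$ with $\delta(s)$ a distribution whenever $\mu(s)>0$, $\sum_s\mu(s)\delta(s)(s')=\mu'(s')$ for all $s'$, and $\delta(s)(s')>0\Rightarrow(s,s')\in\mathcal Q$. For $\mathcal Q\subseteq S_1\times S_2$, say a pair $(s_1,s_2)$ satisfies the refinement conditions w.r.t. $\mathcal Q$ if: $V_1(s_1)\subseteq V_2(s_2)$; whenever $L_2(s_2,a,\phi_2)=\top$ there is $\phi_1$ with $L_1(s_1,a,\phi_1)=\top$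 and every $\mu_1\in Sat(\phi_1)$ has some $\mu_2\in Sat(\phi_2)$ with $\mu_1\Subset_{\mathcal Q}\mu_2$; whenever $L_1(s_1,a,\phi_1)\ne\bot$ there is $\phi_2$ with $L_2(s_2,a,\phi_2)\ne\bot$ and every $\mu_1\in Sat(\phi_1)$ has some $\mu_2\in Sat(\phi_2)$ with $\mu_1\Subset_{\mathcal Q}\mu_2$. A refinement relation is a $\mathcal Q$ all of whose pairs satisfy the refinement conditions w.r.t. $\mathcal Q$; $N_1\preceq N_2$ if some refinement relation contains $(s_0^1,s_0^2)$. The maximal refinement relation $\mathcal R$ is the union of all refinement relations. For $N$ in SVNF, $\mathsf{succ}_{s,a}(v)=\{s'\mid V(s')=\{v\},\ \exists\phi\,\exists\mu\in Sat(\phi):L(s,a,\phi)\ne\bot,\mu(s')>0\}$; for deterministic $N$ this has at most one element, identified with that element (or $\emptyset$); for $s_1'\in S_1$ with $V_1(s_1')=\{v\}$, $\mathsf{succ}_{s_2,e}(s_1'):=\mathsf{succ}_{s_2,e}(v)$ computed in $N_2$. Iteration and index: $\mathcal R_0=S_1\times S_2$; $\mathcal R_{k+1}$ is the set of pairs of $\mathcal R_k$ that satisfy the refinement conditions w.r.t. $\mathcal R_k$. The sequence is decreasing and reaches a fixed point; let $\mathrm{ind}(\mathcal R)=K$ be the least index of the fixed point, so that $\mathcal R_K=\mathcal R$. For a pair, $\mathrm{ind}_{\mathcal R}(s_1,s_2)=\min(\max\{k\mid(s_1,s_2)\in\mathcal R_k\},K)$. Cases: $(s_1,s_2)$ is in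 case 3 if $(s_1,s_2)\notin\mathcal R$ and $V_1(s_1)=V_2(s_2)$. For such a pair and $e\in A$: $e\in B_a(s_1,s_2)$ iff some $\phi_1$ has $L_1(s_1,e,\phi_1)=\top$ and $L_2(s_2,e,\cdot)\equiv\bot$; $e\in B_b$ iff some $\phi_1$ has $L_1(s_1,e,\phi_1)=?$ and $L_2(s_2,e,\cdot)\equiv\bot$; $e\in B_c$ iff some $\phi_1$ has $L_1(s_1,e,\phi_1)\in\{?,\top\}$, some $\phi_2$ has $L_2(s_2,e,\phi_2)=?$, and some $\mu\in Sat(\phi_1)$ has $\mu\not\Subset_{\mathcal R}\mu'$ for all $\mu'\in Sat(\phi_2)$; $e\in B_d$ iff some $\phi_2$ has $L_2(s_2,e,\phi_2)=\top$ and $L_1(s_1,e,\cdot)\equiv\bot$; $e\in B_e$ iff some $\phi_2$ has $L_2(s_2,e,\phi_2)=\top$ and some $\phi_1$ has $L_1(s_1,e,\phi_1)=?$; $e\in B_f$ iff some $\phi_2$ has $L_2(s_2,e,\phi_2)=\top$, some $\phi_1$ has $L_1(s_1,e,\phi_1)=\top$, and some $\mu\in Sat(\phi_1)$ has $\mu\not\Subset_{\mathcal R}\mu'$ for all $\mu'\in Sat(\phi_2)$. Breaking set: for $(s_1,s_2)$ with $V_1(s_1)=V_2(s_2)$ and $\mathrm{ind}_{\mathcal R}(s_1,s_2)=k<\mathrm{ind}(\mathcal R)$, $\mathrm{Breaking}(s_1,s_2)$ is the set of $a\in A$ such that $a\in B_a(s_1,s_2)\cup B_b(s_1,s_2)\cup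 B_d(s_1,s_2)\cup B_e(s_1,s_2)$, or there exist $\phi_1\in C(S_1)$, $\phi_2\in C(S_2)$, $\mu_1\in Sat(\phi_1)$ with $L_1(s_1,a,\phi_1)\ne\bot$, $L_2(s_2,a,\phi_2)\ne\bot$ and $\mu_1\not\Subset_{\mathcal R_k}\mu_2$ for all $\mu_2\in Sat(\phi_2)$. *)

From HB Require Import structures.
From mathcomp Require Import all_boot all_order all_algebra.
From mathcomp Require Import reals.
From Stdlib Require Import ClassicalEpsilon.
Set Implicit Arguments. Unset Strict Implicit. Unset Printing Implicit Defensive.
Import Order.TTheory GRing.Theory Num.Theory.
Local Open Scope ring_scope.

(* modalities: Must = top, May = ?, No = bot *)
Inductive mval := Must | May | No.

Section APAdefs.
Variable R : realType.

Definition isDist (S : finType) (mu : S -> R) :=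
  (forall s, 0 <= mu s) /\ \sum_(s : S) mu s = 1.

(* An APA over action set A and atomic propositions AP. [cst] is C(S),
   [Sat phi] is Sat(phi) (a set of distributions on [st]). *)
Record APA (A AP : finType) := {
  st : finType;
  cst : Type;
  Sat : cst -> (st -> R) -> Prop;
  Sat_dist : forall phi mu, Sat phi mu -> isDist mu;
  L : st -> A -> cst -> mval;
  V : st -> {set {set AP}};
  init : {set st}
}.
Arguments st {A AP} _.
Arguments cst {A AP} _.
Arguments Sat {A AP} _ _ _.
Arguments L {A AP} _ _ _ _.
Arguments V {A AP} _ _.
Arguments init {A AP} _.

Variables A AP : finType.

Definition SVNF (N : APA A AP) := forall s, (#|V N s| <= 1)%N.

Definition deterministic (N : APA A AP) :=
  (exists s0, init N = [set s0]) /\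
  (forall s a phi phi', L N s a phi <> No -> L N s a phi' <> No -> phi = phi') /\
  (forall s a phi (s' s'' : st N), L N s a phi <> No -> s' <> s'' ->
     V N s' :&: V N s'' != set0 ->
     ~ (exists mu mu', Sat N phi mu /\ Sat N phi mu' /\ 0 < mu s' /\ 0 < mu' s'')).

Definition wsub (S1 S2 : finType) (Q : S1 -> S2 -> Prop)
  (mu : S1 -> R) (mu' : S2 -> R) :=
  exists delta : S1 -> S2 -> R,
    (forall s s', 0 <= delta s s' <= 1) /\
    (forall s, 0 < mu s -> isDist (delta s)) /\
    (forall s', \sum_(s : S1) mu s * delta s s' = mu' s') /\
    (forall s s', 0 < delta s s' -> Q s s').

Section Pair.
Variables N1 N2 : APA A AP.

Definition refcond (Q : st N1 -> st N2 -> Prop) (s1 : st N1) (s2 : st N2) :=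
  V N1 s1 \subset V N2 s2 /\
  (forall a phi2, L N2 s2 a phi2 = Must ->
     exists phi1, L N1 s1 a phi1 = Must /\
       forall mu1, Sat N1 phi1 mu1 -> exists mu2, Sat N2 phi2 mu2 /\ wsub Q mu1 mu2) /\
  (forall a phi1, L N1 s1 a phi1 <> No ->
     exists phi2, L N2 s2 a phi2 <> No /\
       forall mu1, Sat N1 phi1 mu1 -> exists mu2, Sat N2 phi2 mu2 /\ wsub Q mu1 mu2).

Definition is_refrel (Q : st N1 -> st N2 -> Prop) :=
  forall s1 s2, Q s1 s2 -> refcond Q s1 s2.

Definition refines :=
  forall s01, s01 \in init N1 -> exists s02, s02 \in init N2 /\
    exists Q, is_refrel Q /\ Q s01 s02.

Definition maxrel (s1 : st N1) (s2 : st N2) :=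
  exists Q, is_refrel Q /\ Q s1 s2.

Fixpoint Rk (k : nat) : st N1 -> st N2 -> Prop :=
  match k with
  | 0 => fun _ _ => True
  | k'.+1 => fun s1 s2 => Rk k' s1 s2 /\ refcond (Rk k') s1 s2
  end.

Definition releq (Q Q' : st N1 -> st N2 -> Prop) :=
  forall s1 s2, Q s1 s2 <-> Q' s1 s2.

Definition indR : nat :=
  epsilon (inhabits 0%N) (fun K => releq (Rk K) (Rk K.+1) /\
             forall j, (j < K)%N -> ~ releq (Rk j) (Rk j.+1)).

(* ind_R(s1,s2) = min(max{k | (s1,s2) in R_k}, ind(R)) *)
Definition ind_pair (s1 : st N1) (s2 : st N2) : nat :=
  epsilon (inhabits 0%N) (fun k => (k <= indR)%N /\ Rk k s1 s2 /\
             forall j, (k < j)%N -> (j <= indR)%N -> ~ Rk j s1 s2).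

(* succ_{s,a}(v) in N2 (as a predicate), and for deterministic N2 its
   unique element, if any *)
Definition succset (s : st N2) (a : A) (v : {set AP}) (s' : st N2) :=
  V N2 s' = [set v] /\
  exists phi mu, L N2 s a phi <> No /\ Sat N2 phi mu /\ 0 < mu s'.

Definition succ_v (s : st N2) (a : A) (v : {set AP}) : option (st N2) :=
  match excluded_middle_informative (exists s', succset s a v s') with
  | left H => Some (proj1_sig (constructive_indefinite_description _ H))
  | right _ => None
  end.

(* succ_{s2,e}(s1') := succ_{s2,e}(v) where V1(s1') = {v};
   None (= emptyset) if V1(s1') is not a singleton *)
Definition succ_of (s2 : st N2) (e : A) (s1' : st N1) : option (st N2) :=
  match excluded_middle_informative (exists v, V N1 s1' = [set v]) with
  | left H => succ_v s2 e (proj1_sig (constructive_indefinite_description _ H))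
  | right _ => None
  end.

Definition case3 (s1 : st N1) (s2 : st N2) :=
  ~ maxrel s1 s2 /\ V N1 s1 = V N2 s2.

Definition Ba (s1 : st N1) (s2 : st N2) (e : A) :=
  (exists phi1, L N1 s1 e phi1 = Must) /\ (forall phi2, L N2 s2 e phi2 = No).
Definition Bb (s1 : st N1) (s2 : st N2) (e : A) :=
  (exists phi1, L N1 s1 e phi1 = May) /\ (forall phi2, L N2 s2 e phi2 = No).
Definition Bc (s1 : st N1) (s2 : st N2) (e : A) :=
  exists phi1, (L N1 s1 e phi1 = May \/ L N1 s1 e phi1 = Must) /\
  exists phi2, L N2 s2 e phi2 = May /\
  exists mu, Sat N1 phi1 mu /\ forall mu', Sat N2 phi2 mu' -> ~ wsub maxrel mu mu'.
Definition Bd (s1 : st N1) (s2 : st N2) (e : A) :=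
  (exists phi2, L N2 s2 e phi2 = Must) /\ (forall phi1, L N1 s1 e phi1 = No).
Definition Be (s1 : st N1) (s2 : st N2) (e : A) :=
  (exists phi2, L N2 s2 e phi2 = Must) /\ (exists phi1, L N1 s1 e phi1 = May).
Definition Bf (s1 : st N1) (s2 : st N2) (e : A) :=
  exists phi2, L N2 s2 e phi2 = Must /\
  exists phi1, L N1 s1 e phi1 = Must /\
  exists mu, Sat N1 phi1 mu /\ forall mu', Sat N2 phi2 mu' -> ~ wsub maxrel mu mu'.

(* a \in Breaking(s1,s2) (only defined when V1 s1 = V2 s2 and ind < ind(R)) *)
Definition Breaking (s1 : st N1) (s2 : st N2) (a : A) :=
  V N1 s1 = V N2 s2 /\ (ind_pair s1 s2 < indR)%N /\
  (Ba s1 s2 a \/ Bb s1 s2 a \/ Bd s1 s2 a \/ Be s1 s2 a \/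
   exists phi1 phi2 mu1, Sat N1 phi1 mu1 /\ L N1 s1 a phi1 <> No /\
     L N2 s2 a phi2 <> No /\
     forall mu2, Sat N2 phi2 mu2 -> ~ wsub (Rk (ind_pair s1 s2)) mu1 mu2).

End Pair.
End APAdefs.
Arguments st {R A AP} _.
Arguments cst {R A AP} _.
Arguments Sat {R A AP} _ _ _.
Arguments L {R A AP} _ _ _ _.
Arguments V {R A AP} _ _.
Arguments init {R A AP} _.

(* [B_c] and [B_f] make [e] enabled in both [s1] and [s2], which excludes
   [B_a], [B_b] and [B_d]; and since a deterministic APA has at most one
   enabled constraint per state and action, [B_c] (May in [N2]) and [B_f]
   (Must in [N1]) both clash with [B_e] (Must in [N2], May in [N1]).  So [e]
   breaks [(s1, s2)] distributionally: some [mu1] is not [R_k]-dominated by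
   any [mu2 \in Sat phi2], where [k = ind_R(s1, s2)].  If all three
   conclusions failed, every [s1'] in the support of [mu1] would have a
   successor [s2'] with [ind_R(s1', s2') >= k], hence [(s1', s2') \in R_k],
   and pushing [mu1] forward along [succ_{s2,e}] would give such a [mu2]. *)
From mathcomp Require Import all_boot all_order all_algebra.
From mathcomp Require Import reals.
From Stdlib Require Import ClassicalEpsilon Classical.
Set Implicit Arguments. Unset Strict Implicit. Unset Printing Implicit Defensive.
Import Order.TTheory GRing.Theory Num.Theory.
Local Open Scope ring_scope.

Lemma exists_last_below (P : nat -> Prop) : P 0%N ->
  forall n, exists k, (k <= n)%N /\ P k /\
    forall j, (k < j)%N -> (j <= n)%N -> ~ P j.
Proof.
move=> P0; elim=> [|n [k [le_kn [Pk lastk]]]].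
  by exists 0%N; split=> //; split=> // j lt_0j; rewrite leqNgt lt_0j.
have [Pn1 | nPn1] := classic (P n.+1).
  by exists n.+1; split=> //; split=> // j lt_n1j; rewrite leqNgt lt_n1j.
exists k; split; first exact: leqW.
split=> // j lt_kj; rewrite leq_eqVlt => /orP[/eqP -> // | ].
exact: lastk.
Qed.

Section Iteration.
Variables (R : realType) (A AP : finType) (N1 N2 : APA R A AP).

Lemma Rk_mono (s1 : st N1) (s2 : st N2) j k :
  (j <= k)%N -> Rk k s1 s2 -> Rk j s1 s2.
Proof.
elim: k j => [|k IHk] j; first by rewrite leqn0 => /eqP ->.
rewrite leq_eqVlt => /orP[/eqP -> // | ]; rewrite ltnS => le_jk [Rks _].
exact: IHk.
Qed.

Lemma Rk_ind_pair (s1 : st N1) (s2 : st N2) : Rk (ind_pair s1 s2) s1 s2.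
Proof.
have := epsilon_spec (inhabits 0%N) _
  (exists_last_below (P := fun k => Rk k s1 s2) I (indR N1 N2)).
by case=> _ [].
Qed.

Lemma Rk_le_ind_pair (s1 : st N1) (s2 : st N2) k :
  (k <= ind_pair s1 s2)%N -> Rk k s1 s2.
Proof. by move=> le_k; apply: Rk_mono le_k (Rk_ind_pair s1 s2). Qed.

End Iteration.

Section Pushforward.
Variables (R : realType) (S1 S2 : finType).

Definition pushforward (f : S1 -> option S2) (mu : S1 -> R) : S2 -> R :=
  fun t => \sum_(s | f s == Some t) mu s.

(* The transport plan moves all the mass of [s] to [f s]. *)
Lemma wsub_pushforward (Q : S1 -> S2 -> Prop) (f : S1 -> option S2)
    (mu : S1 -> R) :
  (forall s, 0 <= mu s) ->
  (forall s, 0 < mu s -> exists2 t, f s = Some t & Q s t) ->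
  wsub Q mu (pushforward f mu).
Proof.
move=> mu_ge0 hf.
exists (fun s t => if (0 < mu s) && (f s == Some t) then 1 else 0).
split; first by move=> s t; case: ifP; rewrite ?lexx ?ler01.
split.
  move=> s mu_s_gt0; split; first by move=> t; case: ifP; rewrite ?ler01.
  have [t fs _] := hf s mu_s_gt0.
  rewrite (bigD1 t) //= mu_s_gt0 fs eqxx /= big1 ?addr0 // => t' ne_t't.
  by rewrite (inj_eq Some_inj) eq_sym (negbTE ne_t't).
split.
  move=> t; rewrite /pushforward [RHS]big_mkcond /=; apply: eq_bigr => s _.
  have [mu_s_gt0 | mu_s_le0] := ltrP 0 (mu s).
    by case: (_ == _); rewrite ?mulr1 ?mulr0.
  have -> : mu s = 0 by apply/eqP; rewrite eq_le mu_s_le0 mu_ge0.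
  by rewrite mul0r; case: (_ == _).
move=> s t; case: ifP => [/andP[mu_s_gt0 /eqP fs] _ | _]; last by rewrite ltxx.
by have [t' ft' Qt'] := hf s mu_s_gt0; move: fs; rewrite ft' => -[<-].
Qed.

End Pushforward.

Section BreakingActions.
Variables (R : realType) (A AP : finType) (N1 N2 : APA R A AP).
Variables (s1 : st N1) (s2 : st N2) (e : A).

Lemma Bc_or_Bf_enabled : Bc s1 s2 e \/ Bf s1 s2 e ->
  (exists phi1, L N1 s1 e phi1 <> No) /\ (exists phi2, L N2 s2 e phi2 <> No).
Proof.
case=> [[phi1 [hL1 [phi2 [hL2 _]]]] | [phi2 [hL2 [phi1 [hL1 _]]]]].
  by split; [exists phi1; case: hL1 => -> | exists phi2; rewrite hL2].
by split; [exists phi1; rewrite hL1 | exists phi2; rewrite hL2].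
Qed.

Hypothesis L1_unique : forall s a phi phi',
  L N1 s a phi <> No -> L N1 s a phi' <> No -> phi = phi'.
Hypothesis L2_unique : forall s a phi phi',
  L N2 s a phi <> No -> L N2 s a phi' <> No -> phi = phi'.

Lemma Bc_or_Bf_not_Be : Bc s1 s2 e \/ Bf s1 s2 e -> ~ Be s1 s2 e.
Proof.
move=> hcf [[psi2 hpsi2] [psi1 hpsi1]].
case: hcf => [[phi1 [_ [phi2 [hL2 _]]]] | [_ [_ [phi1 [hL1 _]]]]].
  have phi2E : phi2 = psi2 by apply: (@L2_unique s2 e);
    rewrite ?hL2 ?hpsi2.
  by move: hL2; rewrite phi2E hpsi2.
have phi1E : phi1 = psi1 by apply: (@L1_unique s1 e);
  rewrite ?hL1 ?hpsi1.
by move: hL1; rewrite phi1E hpsi1.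
Qed.

Lemma Breaking_Bc_or_Bf_undominated :
  Bc s1 s2 e \/ Bf s1 s2 e -> Breaking s1 s2 e ->
  exists phi1 phi2 mu1, Sat N1 phi1 mu1 /\
    L N1 s1 e phi1 <> No /\ L N2 s2 e phi2 <> No /\
    forall mu2, Sat N2 phi2 mu2 -> ~ wsub (Rk (ind_pair s1 s2)) mu1 mu2.
Proof.
move=> hcf [_ [_ hbreak]].
have [[phi1 hL1] [phi2 hL2]] := Bc_or_Bf_enabled hcf.
case: hbreak => [[_ no2] | [[_ no2] | [[_ no1] | [hBe | //]]]].
- by case: (hL2 (no2 phi2)).
- by case: (hL2 (no2 phi2)).
- by case: (hL1 (no1 phi1)).
- by case: (Bc_or_Bf_not_Be hcf hBe).
Qed.

End BreakingActions.

Theorem lemma5p1 (R : realType) (A AP : finType) (N1 N2 : APA R A AP) :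
  SVNF N1 -> SVNF N2 -> deterministic N1 -> deterministic N2 ->
  ~ refines N1 N2 ->
  forall (s1 : st N1) (s2 : st N2) (e : A),
    case3 s1 s2 ->
    (Bc s1 s2 e \/ Bf s1 s2 e) -> Breaking s1 s2 e ->
    exists (phi1 : cst N1) (phi2 : cst N2),
      L N1 s1 e phi1 <> No /\ L N2 s2 e phi2 <> No /\
      exists mu1 : st N1 -> R, Sat N1 phi1 mu1 /\
        ((exists s1' : st N1, 0 < mu1 s1' /\ succ_of s2 e s1' = None) \/
         ~ Sat N2 phi2 (fun s2' : st N2 =>
              \sum_(s1' : st N1 | succ_of s2 e s1' == Some s2') mu1 s1') \/
         (exists (s1' : st N1) (s2' : st N2), 0 < mu1 s1' /\
            succ_of s2 e s1' = Some s2' /\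
            (ind_pair s1' s2' < ind_pair s1 s2)%N)).
Proof.
move=> _ _ [_ [L1_unique _]] [_ [L2_unique _]] _ s1 s2 e _ hcf hbreak.
have [phi1 [phi2 [mu1 [Sat_mu1 [hL1 [hL2 undominated]]]]]] :=
  Breaking_Bc_or_Bf_undominated L1_unique L2_unique hcf hbreak.
exists phi1, phi2; do 2 split => //; exists mu1; split => //.
apply: NNPP => none_holds.
apply: (undominated (pushforward (succ_of s2 e) mu1)).
  by apply: NNPP => hnSat; apply: none_holds; right; left.
apply: wsub_pushforward => [s | s mu_s_gt0]; first by case: (Sat_dist Sat_mu1).
case succE: (succ_of s2 e s) => [t|]; last first.
  by case: none_holds; left; exists s.
exists t => //; apply: Rk_le_ind_pair; rewrite leqNgt; apply/negP => lt_ind.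
by apply: none_holds; right; right; exists s, t.
Qed.
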